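(* Let $c\ge\lfloor n/2\rfloor$ and $\mathbf{s}_n\in\mathcal{B}(n,c,d_1)$ with $add(\mathbf{s}_n)=t_1$. Suppose that for some integer $h$ with $1\le h\le n-1$, the shifted sequence $R^{h}(\mathbf{s}_n)$ belongs to $\mathcal{B}(n,c,d_2)$ with $add(R^{h}(\mathbf{s}_n))=t_2$. Let $b=h-(n-c-d_1)$. Then $t_1\le b<d_1+d_2-t_2$.
   Context: All sequences are binary (entries in $\mathbb{Z}_2$), $\overline{x}=x\oplus1$, $x\bmod d$ is the least nonnegative residue, and $\mathbf{a}^q$ is the concatenation of $q$ copies of $\mathbf a$. For $\mathbf{s}_n=(s_0,\dots,s_{n-1})$, $\mathbf{s}_j=(s_0,\dots,s_{j-1})$. A length-$m$ sequence is periodic if it is the concatenation of $m/e$ copies of a length-$e$ sequence for a proper divisor $e$ of $m$, aperiodic otherwise. Right circular shift: $R^k(\mathbf{s}_n)=(s_{n-k},\dots,s_{n-1},s_0,\dots,s_{n-k-1})$. For $c\ge\lfloor n/2\rfloor$ and $1\le d\le\min\{n-c,\lfloor n/2\rfloor\}$, $\mathcal{B}(n,c,d)$ is the set of aperiodic length-$n$ sequences $\mathbf{s}_n$ with $\mathbf{s}_d$ aperiodic and $\mathbf{s}_{c+d}=(s_0,\dots,s_{d-1})^q(s_0,\dots,s_{r-1},\overline{s_r})$, where $q=\lfloor(c+d-1)/d\rfloor$, $r=c+d-1-qd$, and $s_{c+d},\dots,s_{n-1}$ are arbitrary. For $\mathbf{s}_n\in\mathcal{B}(n,c,d)$, $add(\mathbf{s}_n)$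 is the integer $t\ge0$ such that $s_{n-1-i}=s_{(d-1-i)\bmod d}$ for $0\le i<t$ and $s_{n-1-t}\neq s_{(d-1-t)\bmod d}$. *)

From mathcomp Require Import all_boot all_order all_algebra.
Set Implicit Arguments. Unset Strict Implicit. Unset Printing Implicit Defensive.

Definition periodic (s : seq bool) : Prop :=
  exists e : nat, [/\ 0 < e, e < size s, e %| size s &
    s = flatten (nseq (size s %/ e) (take e s))].

Definition aperiodic (s : seq bool) : Prop := ~ periodic s.

(* Membership in B(n,c,d) (the parameter range 1 <= d <= min(n-c, n/2)
   is part of the definition of the set). *)
Definition inB (n c d : nat) (s : seq bool) : Prop :=
  let q := (c + d - 1) %/ d in
  let r := c + d - 1 - q * d in
  [/\ size s = n, 1 <= d <= minn (n - c) n./2,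
      aperiodic s, aperiodic (take d s) &
      take (c + d) s =
        flatten (nseq q (take d s)) ++ rcons (take r s) (~~ nth false s r)].

(* add(s) = t for s in B(n,c,d).  The index (d-1-i) mod d (least
   nonnegative residue) equals d - 1 - (i %% d) in nat. *)
Definition is_add (n d : nat) (s : seq bool) (t : nat) : Prop :=
  [/\ t < n,
      (forall i, i < t -> nth false s (n - 1 - i) = nth false s (d - 1 - i %% d)) &
      nth false s (n - 1 - t) != nth false s (d - 1 - t %% d)].

(* Right circular shift R^k: (s_{n-k},...,s_{n-1},s_0,...,s_{n-k-1}). *)
Definition Rshift (k : nat) (s : seq bool) : seq bool := rotr k s.

From mathcomp Require Import all_boot all_order all_algebra.
From mathcomp Require Import zify.

(* View s cyclically, as the n-periodic word Y j = s_(j mod n).  Membership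
   in B(n,c,d) with add = t says that Y has period d on the window
   [n - t, n + c + d - 1), that this period is broken at its right end, and
   that the block Y[n, n + d) is primitive; R^h(s) gives the same picture
   translated by n - h.  If either inequality failed then, as c >= n/2, the
   two windows (after translating the first one by n when needed) would
   share at least d1 + d2 - 1 positions.  By the Fine-Wilf theorem
   gcd(d1, d2) is then a period of a whole window, so primitivity of the
   blocks forces d1 = d2, and the break of one window falls inside the
   other. *)

Set Implicit Arguments.
Unset Strict Implicit.
Unset Printing Implicit Defensive.

Section Periods.

Variable T : Type.

Definition period_on (f : nat -> T) p a e :=
  forall i j, a <= i < e -> a <= j < e -> i = j %[mod p] -> f i = f j.

Definition primitive_block (f : nat -> T) o D :=
  forall g, g < D -> g %| D -> ~ period_on f g o (o + D).

Variable f : nat -> T.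

Lemma period_onP p a e :
  period_on f p a e <-> forall i, a <= i -> i + p < e -> f i = f (i + p).
Proof.
split=> [Hp i ai lt_e | Hstep i j]; first by apply: Hp; rewrite ?modnDr; lia.
wlog le_ij : i j / i <= j => [W hi hj eq_ij|].
  by case: (leqP i j) => [|/ltnW] le; [apply: W | symmetry; apply: W].
move=> /andP[ai _] /andP[_ je] /esym/eqP; rewrite eqn_mod_dvd // => /dvdnP[k jE].
have {}jE : j = i + k * p by lia.
rewrite {j le_ij}jE in je *.
elim: k je => [|k IHk]; first by rewrite addn0.
rewrite mulSnr addnA => lt_e; rewrite -Hstep ?IHk //; lia.
Qed.

Lemma period_on_sub p a e a' e' :
  a <= a' -> e' <= e -> period_on f p a e -> period_on f p a' e'.
Proof. by move=> aa' e'e Hp i j hi hj; apply: Hp; lia. Qed.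

Lemma period_on_shift g k p a e : (forall j, g j = f (j + k)) ->
  period_on g p a e <-> period_on f p (a + k) (e + k).
Proof.
move=> gE; split=> Hp i j hi hj eq_ij.
- have [i' iE] : exists i', i = i' + k by exists (i - k); lia.
  have [j' jE] : exists j', j = j' + k by exists (j - k); lia.
  rewrite iE jE -!gE; apply: Hp; try lia.
  by apply/eqP; rewrite -(eqn_modDr k) -iE -jE; apply/eqP.
- rewrite !gE; apply: Hp; try lia.
  by apply/eqP; rewrite eqn_modDr; apply/eqP.
Qed.

Lemma exists_mod_in D a i :
  0 < D -> exists2 i', a <= i' < a + D & i' = i %[mod D].
Proof.
move=> D_gt0; exists (a + (i + a * D - a) %% D).
  by rewrite leq_addr ltn_add2l ltn_pmod.
have le_a : a <= i + a * D by rewrite (leq_trans (leq_pmulr a D_gt0)) ?leq_addl.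
by rewrite modnDmr subnKC // addnC modnMDl.
Qed.

Lemma period_on_extend D g a e a' e' : 0 < D -> g %| D ->
  a <= a' -> a' + D <= e' -> e' <= e ->
  period_on f D a e -> period_on f g a' e' -> period_on f g a e.
Proof.
move=> D_gt0 gD aa' De' e'e HD Hg i j hi hj eq_ij.
have in_e x : a' <= x < a' + D -> a <= x < e by clear -aa' De' e'e; lia.
have in_e' x : a' <= x < a' + D -> a' <= x < e' by clear -De'; lia.
have [i' hi' ii'] := exists_mod_in a' i D_gt0.
have [j' hj' jj'] := exists_mod_in a' j D_gt0.
have -> : f i = f i' by apply: HD => //; exact: in_e.
have -> : f j = f j' by apply: HD => //; exact: in_e.
apply: Hg; [exact: in_e' | exact: in_e' |].
rewrite -(modn_dvdm i' gD) ii' modn_dvdm // eq_ij.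
by rewrite -(modn_dvdm j gD) -jj' modn_dvdm.
Qed.

Theorem fine_wilf p q a e : 0 < p -> 0 < q -> p + q - gcdn p q <= e - a ->
  period_on f p a e -> period_on f q a e -> period_on f (gcdn p q) a e.
Proof.
have [N] := ubnP (p + q); elim: N => // N IH in p q e *; rewrite ltnS => pqN.
wlog le_pq : p q pqN / p <= q => [W p_gt0 q_gt0 len Hp Hq|].
  case: (leqP p q) => [|/ltnW] le; first exact: W.
  by rewrite gcdnC; apply: W => //; rewrite (addnC q) 1?gcdnC.
move=> p_gt0 q_gt0 len Hp Hq.
have [<-|neq_pq] := eqVneq p q; first by rewrite gcdnn.
have lt_pq : p < q by rewrite ltn_neqAle neq_pq.
have gE : gcdn p (q - p) = gcdn p q by rewrite -gcdnDr subnK // ltnW.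
have g_le : gcdn p q <= q - p by rewrite -gE dvdn_leq ?subn_gt0 ?dvdn_gcdr.
have Hqp : period_on f (q - p) a (e - p).
  apply/period_onP => i ai lt_e.
  have -> : f i = f (i + q) by apply: Hq; rewrite ?modnDr //; lia.
  apply: Hp; [lia | lia |].
  by rewrite -[in i + q](subnK (ltnW lt_pq)) addnA modnDr.
apply: (period_on_extend (e' := e - p) p_gt0 (dvdn_gcdl p q) (leqnn a) _ _ Hp);
  try lia.
rewrite -gE; apply: (IH p (q - p) (e - p)); rewrite ?gE ?subn_gt0 //; try lia.
exact: period_on_sub (leqnn a) (leq_subr p e) Hp.
Qed.

Lemma primitive_block_dvd d D a e a' e' o : 0 < d -> 0 < D ->
  a <= a' -> e' <= e -> d + D - 1 <= e' - a' -> a <= o -> o + D <= e ->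
  period_on f D a e -> period_on f d a' e' -> primitive_block f o D -> D %| d.
Proof.
move=> d_gt0 D_gt0 aa' e'e len ao oDe HD Hd primD.
have gD : gcdn d D %| D by apply: dvdn_gcdr.
have Hg : period_on f (gcdn d D) a e.
  apply: (period_on_extend (e' := e') D_gt0 gD aa' _ e'e HD); first lia.
  have g_gt0 : 0 < gcdn d D by rewrite gcdn_gt0 d_gt0.
  apply: fine_wilf => //; first lia.
  exact: period_on_sub aa' e'e HD.
have /eqP <- : gcdn d D == D.
  rewrite eqn_leq dvdn_leq //= leqNgt; apply/negP => lt_gD.
  by apply: (primD _ lt_gD gD); apply: period_on_sub Hg; lia.
exact: dvdn_gcdl.
Qed.

Lemma primitive_periods_eq d1 d2 a1 e1 a2 e2 o1 o2 : 0 < d1 -> 0 < d2 ->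
  a1 <= o1 -> o1 + d1 <= e1 -> a2 <= o2 -> o2 + d2 <= e2 ->
  d1 + d2 - 1 <= minn e1 e2 - maxn a1 a2 ->
  period_on f d1 a1 e1 -> period_on f d2 a2 e2 ->
  primitive_block f o1 d1 -> primitive_block f o2 d2 -> d1 = d2.
Proof.
move=> d1_gt0 d2_gt0 ao1 oe1 ao2 oe2 len H1 H2 prim1 prim2.
have [a1a e1e a2a e2e] : [/\ a1 <= maxn a1 a2, minn e1 e2 <= e1,
    a2 <= maxn a1 a2 & minn e1 e2 <= e2].
  by rewrite leq_maxl leq_maxr geq_minl geq_minr.
apply/eqP; rewrite eqn_dvd; apply/andP; split.
- apply: (primitive_block_dvd d2_gt0 d1_gt0 a1a e1e _ ao1 oe1 H1 _ prim1);
    first by lia.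
  exact: period_on_sub a2a e2e H2.
- apply: (primitive_block_dvd d1_gt0 d2_gt0 a2a e2e _ ao2 oe2 H2 _ prim2);
    first by lia.
  exact: period_on_sub a1a e1e H1.
Qed.

End Periods.

Lemma nth_rot (T : Type) (x0 : T) (s : seq T) m k : m <= size s -> k < size s ->
  nth x0 (rot m s) k = nth x0 s ((k + m) %% size s).
Proof.
move=> le_ms lt_ks; rewrite /rot nth_cat size_drop.
case: ltnP => [lt_k | ge_k].
  by rewrite nth_drop addnC modn_small //; lia.
rewrite nth_take; last by lia.
have -> : k + m = k + m - size s + size s by lia.
by rewrite modnDr modn_small; [congr nth | ]; lia.
Qed.

Lemma size_flatten_nseq (T : Type) q (u : seq T) :
  size (flatten (nseq q u)) = q * size u.
Proof. by rewrite size_flatten /shape map_nseq sumn_nseq mulnC. Qed.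

Lemma nth_flatten_nseq (T : Type) (x0 : T) q (u : seq T) k : k < q * size u ->
  nth x0 (flatten (nseq q u)) k = nth x0 u (k %% size u).
Proof.
elim: q k => [|q IHq] k; first by rewrite mul0n.
rewrite mulSn /= nth_cat => lt_k; case: ltnP => [lt_ku | ge_ku].
  by rewrite modn_small.
rewrite IHq; last by lia.
by rewrite -[in k %% _](subnK ge_ku) modnDr.
Qed.

Lemma nth_flatten_nseq_rcons (T : Type) (x0 x : T) (u : seq T) q r k :
  r < size u -> k <= q * size u + r ->
  nth x0 (flatten (nseq q u) ++ rcons (take r u) x) k =
  if k < q * size u + r then nth x0 u (k %% size u) else x.
Proof.
move=> lt_ru le_k; rewrite nth_cat size_flatten_nseq.
case: (ltnP k (q * size u)) => [lt_k | ge_k].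
  by rewrite nth_flatten_nseq // (ltn_addr _ lt_k).
rewrite nth_rcons (size_takel (ltnW lt_ru)) ltn_subLR //.
case: ifP => [lt_k | ge_k']; last by rewrite ifT //; apply/eqP; lia.
rewrite nth_take ?ltn_subLR // -[in k %% _](subnKC ge_k) modnMDl modn_small //.
lia.
Qed.

Definition cyc (s : seq bool) (j : nat) : bool := nth false s (j %% size s).

Lemma cyc_add_size s j : cyc s (j + size s) = cyc s j.
Proof. by rewrite /cyc modnDr. Qed.

Lemma cyc_size_add s k : k < size s -> cyc s (size s + k) = nth false s k.
Proof. by move=> lt_k; rewrite /cyc addnC modnDr modn_small. Qed.

Lemma cyc_rotr s h j : h <= size s -> cyc (rotr h s) j = cyc s (j + (size s - h)).
Proof.
case: s => [|x s] le_hs; first by rewrite /cyc /= !nth_nil.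
by rewrite /cyc size_rotr /rotr nth_rot ?leq_subr ?ltn_pmod // modnDml.
Qed.

Lemma inB_prefix n c d w : inB n c d w ->
  (forall k, k < c + d - 1 -> nth false w k = nth false w (k %% d)) /\
  nth false w (c + d - 1) = ~~ nth false w ((c + d - 1) %% d).
Proof.
case=> size_w /andP[d_gt0 le_d] _ _.
have rE : c + d - 1 - (c + d - 1) %/ d * d = (c + d - 1) %% d.
  by rewrite {1}(divn_eq (c + d - 1) d) addKn.
have size_u : size (take d w) = d by rewrite size_takel // size_w; lia.
have lt_rd := ltn_pmod (c + d - 1) d_gt0.
rewrite rE -(take_takel w (ltnW lt_rd)) => E.
have nthE k : k <= c + d - 1 -> nth false w k =
    if k < c + d - 1 then nth false w (k %% d)
    else ~~ nth false w ((c + d - 1) %% d).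
  move=> le_k; rewrite -(@nth_take (c + d)); last by lia.
  rewrite E nth_flatten_nseq_rcons size_u -?divn_eq //.
  by case: ifP => // _; rewrite nth_take // ltn_pmod.
split=> [k lt_k | ]; last by rewrite nthE // ltnn.
by rewrite nthE ?lt_k // ltnW.
Qed.

(* [bwindow f c d t o]: around the origin o, f looks like a member of
   B(n,c,d) with add = t, as [cyc s] does around n. *)
Definition bwindow (f : nat -> bool) c d t o :=
  [/\ period_on f d (o - t) (o + (c + d - 1)),
      f (o + (c - 1)) != f (o + (c - 1) + d)
    & primitive_block f o d].

Section InBWindow.

Variables (n c d t : nat) (w : seq bool).
Hypotheses (hB : inB n c d w) (hA : is_add n d w t).

Lemma cyc_prefix k : k < c + d - 1 -> cyc w (n + k) = nth false w (k %% d).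
Proof.
have [size_w /andP[d_gt0 le_d] _ _ _] := hB.
move=> lt_k; rewrite -size_w cyc_size_add; last by lia.
by apply: (inB_prefix hB).1.
Qed.

Lemma cyc_suffix i : i < t -> cyc w (n - 1 - i) = nth false w (d - 1 - i %% d).
Proof.
have [size_w _ _ _ _] := hB; have [lt_tn add_eq _] := hA.
by move=> lt_i; rewrite /cyc size_w modn_small ?(add_eq _ lt_i) //; lia.
Qed.

Lemma inB_period : period_on (cyc w) d (n - t) (n + (c + d - 1)).
Proof.
have [_ /andP[d_gt0 le_d] _ _ _] := hB; have [lt_tn _ _] := hA.
apply/period_onP => j ge_j lt_j; case: (leqP n j) => [le_nj | lt_jn].
  rewrite -(subnKC le_nj) -addnA !cyc_prefix ?modnDr //; lia.
have [i [jE lt_it]] : exists i, j = n - 1 - i /\ i < t by exists (n - 1 - j); lia.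
rewrite jE cyc_suffix //; case: (leqP d i) => [le_di | lt_id].
  rewrite (_ : n - 1 - i + d = n - 1 - (i - d)); last by lia.
  rewrite cyc_suffix; last by lia.
  by rewrite -[in i %% d](subnK le_di) modnDr.
rewrite (_ : n - 1 - i + d = n + (d - 1 - i)); last by lia.
rewrite cyc_prefix; last by lia.
by rewrite !modn_small //; lia.
Qed.

Lemma inB_break : 0 < c -> cyc w (n + (c - 1)) != cyc w (n + (c - 1) + d).
Proof.
have [size_w /andP[d_gt0 le_d] _ _ _] := hB; have [_ brk] := inB_prefix hB.
move=> c_gt0; rewrite -addnA (_ : c - 1 + d = c + d - 1); last by lia.
rewrite cyc_prefix; last by lia.
rewrite -size_w cyc_size_add; last by lia.
rewrite brk (_ : c + d - 1 = c - 1 + d) ?modnDr; last by lia.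
by case: (nth _ _ _).
Qed.

Lemma inB_primitive : primitive_block (cyc w) n d.
Proof.
have [size_w /andP[d_gt0 le_d] _ aper_u _] := hB.
move=> g lt_gd dvd_gd Hg; apply: aper_u; exists g.
have size_u : size (take d w) = d by rewrite size_takel // size_w; lia.
have g_gt0 : 0 < g := dvdn_gt0 d_gt0 dvd_gd.
have size_ug : size (take g (take d w)) = g by rewrite size_takel // size_u ltnW.
rewrite size_u; split => //; apply: (@eq_from_nth _ false).
  by rewrite size_flatten_nseq size_ug size_u divnK.
move=> i; rewrite size_u => lt_id.
have lt_igd : i %% g < d := ltn_trans (ltn_pmod i g_gt0) lt_gd.
have cycE k : k < d -> nth false w k = cyc w (n + k).
  by move=> lt_k; rewrite -size_w cyc_size_add //; lia.
rewrite nth_flatten_nseq ?size_ug ?divnK // !nth_take ?ltn_pmod // !cycE //.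
by apply: Hg; rewrite ?leq_addr ?ltn_add2l // modnDmr.
Qed.

Lemma inB_bwindow : 0 < c -> bwindow (cyc w) c d t n.
Proof.
move=> c_gt0.
by split; [exact: inB_period | exact: inB_break | exact: inB_primitive].
Qed.

End InBWindow.

Lemma bwindow_shift f g k c d t o : (forall j, g j = f (j + k)) -> t <= o ->
  bwindow g c d t o -> bwindow f c d t (o + k).
Proof.
move=> gE le_to [P brk prim]; split.
- by rewrite -addnBAC // (addnAC o k); apply/(period_on_shift _ _ _ gE).
- by rewrite !(addnAC o k) (addnAC _ k d) -!gE.
- move=> q lt_qd dvd_qd Hq; apply: (prim q lt_qd dvd_qd).
  by apply/(period_on_shift _ _ _ gE); rewrite addnAC.
Qed.

Lemma bwindow_overlap f c d1 d2 t1 t2 o1 o2 :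
  bwindow f c d1 t1 o1 -> bwindow f c d2 t2 o2 -> 0 < c -> 0 < d1 -> 0 < d2 ->
  d1 + d2 - 1 <=
    minn (o1 + (c + d1 - 1)) (o2 + (c + d2 - 1)) - maxn (o1 - t1) (o2 - t2) ->
  o1 - t1 <= o2 + (c - 1) -> o2 < o1 -> False.
Proof.
move=> [P1 _ prim1] [P2 brk2 prim2] c_gt0 d1_gt0 d2_gt0 len lo lt_o.
have d12 : d1 = d2.
  apply: (primitive_periods_eq d1_gt0 d2_gt0 _ _ _ _ len P1 P2 prim1 prim2);
  by lia.
move: brk2; rewrite -{}d12 => /negP; apply; apply/eqP.
by apply: P1; rewrite ?modnDr //; lia.
Qed.

Theorem lemma6 (n c d1 d2 t1 t2 h : nat) (s : seq bool) :
  n./2 <= c ->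
  inB n c d1 s -> is_add n d1 s t1 ->
  1 <= h <= n - 1 ->
  inB n c d2 (Rshift h s) -> is_add n d2 (Rshift h s) t2 ->
  let b : int := (h%:Z - (n%:Z - c%:Z - d1%:Z))%R in
  (t1%:Z <= b)%R /\ (b < d1%:Z + d2%:Z - t2%:Z)%R.
Proof.
move=> le_c hB1 hA1 /andP[ge_h le_h] hB2 hA2 b.
have [size_s /andP[d1_gt0 le_d1] _ _ _] := hB1.
have [_ /andP[d2_gt0 le_d2] _ _ _] := hB2.
have [[lt_t1 _ _] [lt_t2 _ _]] := (hA1, hA2).
have c_gt0 : 0 < c by lia.
have W1 := inB_bwindow hB1 hA1 c_gt0.
have W1' : bwindow (cyc s) c d1 t1 (n + n).
  by apply: bwindow_shift W1 => [j|]; rewrite -?size_s ?cyc_add_size //; lia.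
have W2 : bwindow (cyc s) c d2 t2 (n + (n - h)).
  apply: bwindow_shift (inB_bwindow hB2 hA2 c_gt0) => [j|]; last by lia.
  by rewrite /Rshift cyc_rotr size_s //; lia.
split.
- suff : t1 + (n - h) <= c + d1 by rewrite /b; lia.
  rewrite leqNgt; apply/negP => lt_b.
  by apply: (bwindow_overlap W1' W2); lia.
- suff : c + t2 < n - h + d2 by rewrite /b; lia.
  rewrite ltnNge; apply/negP => ge_b.
  by apply: (bwindow_overlap W2 W1); lia.
Qed.
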